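(* Let $\mathbb{M}$ be a weight sequence with sequence of quotients $\mathbf{m}$. Then $\beta(\mathbf{m})=\frac{1}{\alpha(\nu_{\mathbf{m}})}$ and $\alpha(\mathbf{m})=\frac{1}{\beta(\nu_{\mathbf{m}})}$ (with the conventions $1/0=\infty$, $1/\infty=0$).
   Context: A weight sequence is $\mathbb{M}=(M_p)_{p\in\mathbb{N}_0}$ of positive reals with $M_0=1$, $M_p^2\le M_{p-1}M_{p+1}$ ($p\ge1$) and $M_p^{1/p}\to\infty$; $m_p=M_{p+1}/M_p$. $\nu_{\mathbf{m}}(t):=\#\{j\in\mathbb{N}_0:m_j\le t\}$ for $t>0$. For a positive measurable $f$ on $[A,\infty)$: $\alpha(f):=\inf\{\alpha:\exists C_\alpha>0\ \forall\Lambda>1,\ \limsup_{x\to\infty}\sup_{\lambda\in[1,\Lambda]}\frac{f(\lambda x)}{\lambda^{\alpha}f(x)}\le C_\alpha\}$ and $\beta(f):=\sup\{\beta:\exists D_\beta>0\ \forall\Lambda>1,\ \liminf_{x\to\infty}\inf_{\lambda\in[1,\Lambda]}\frac{f(\lambda x)}{\lambda^{\beta}f(x)}\ge D_\beta\}$ ($\inf\emptyset=\infty$, $\sup\emptyset=-\infty$); for $\nu_{\mathbf{m}}$ these are computed on $[m_0,\infty)$. For the sequence $\mathbf{m}$, $\alpha(\mathbf{m}),\beta(\mathbf{m})$ are these indices of the step function $f(x)=m_{\lfloor x\rfloor-1}$, $x\ge1$. *)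

From HB Require Import structures.
From mathcomp Require Import all_boot all_order all_algebra.
From mathcomp Require Import all_classical all_reals all_analysis.
Set Implicit Arguments. Unset Strict Implicit. Unset Printing Implicit Defensive.
Import Order.TTheory GRing.Theory Num.Theory.
Import numFieldNormedType.Exports.
Local Open Scope classical_set_scope.
Local Open Scope ring_scope.

Section Defs.
Variable R : realType.

Definition weight_sequence (M : nat -> R) : Prop :=
  [/\ M 0%N = 1,
      (forall p, 0 < M p),
      (forall p, (1 <= p)%N -> M p ^+ 2 <= M p.-1 * M p.+1)
    & (fun p : nat => M p `^ (p%:R)^-1) @ \oo --> +oo].

Definition quotients (M : nat -> R) (p : nat) : R := M p.+1 / M p.

(* nu_m(t) = #{ j in N_0 : m_j <= t } (finite for weight sequences) *)
Definition nu (m : nat -> R) (t : R) : R :=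
  fine (counting [set j : nat | m j <= t]).

(* step function x |-> m_{floor(x) - 1} (relevant for x >= 1) *)
Definition seqfun (m : nat -> R) (x : R) : R := m (Num.truncn x).-1.

Definition limsup_infty (g : R -> \bar R) : \bar R :=
  ereal_inf [set ereal_sup (g @` [set x | X <= x]) | X in [set: R]].
Definition liminf_infty (g : R -> \bar R) : \bar R :=
  ereal_sup [set ereal_inf (g @` [set x | X <= x]) | X in [set: R]].

Definition ratio_sup (f : R -> R) (a Lam x : R) : \bar R :=
  ereal_sup [set ((f (l * x)) / (l `^ a * f x))%:E | l in `[1, Lam]].
Definition ratio_inf (f : R -> R) (a Lam x : R) : \bar R :=
  ereal_inf [set ((f (l * x)) / (l `^ a * f x))%:E | l in `[1, Lam]].

Definition alpha_idx (f : R -> R) : \bar R :=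
  ereal_inf [set a%:E | a in [set a : R | exists2 C : R, 0 < C &
     forall Lam : R, 1 < Lam -> (limsup_infty (ratio_sup f a Lam) <= C%:E)%E]].
Definition beta_idx (f : R -> R) : \bar R :=
  ereal_sup [set b%:E | b in [set b : R | exists2 D : R, 0 < D &
     forall Lam : R, 1 < Lam -> (D%:E <= liminf_infty (ratio_inf f b Lam))%E]].

End Defs.

From HB Require Import structures.
From mathcomp Require Import all_boot all_order all_algebra.
From mathcomp Require Import all_classical all_reals all_analysis.
From mathcomp Require Import ring lra.
Set Implicit Arguments. Unset Strict Implicit. Unset Printing Implicit Defensive.
Import Order.TTheory GRing.Theory Num.Theory.
Local Open Scope classical_set_scope.
Local Open Scope ring_scope.

(* If [m] is positive, nondecreasing and unbounded, the counting function [nu m]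
   and the step function [g x = m_(floor x - 1)] are mutually inverse:
   [k <= nu m t] iff [m_(k-1) <= t] for [k >= 1].  Inverting a bound
   [g (l x) <= C l^a g x] (resp. [>=]) through this correspondence yields
   [nu m (l t) >= c l^(1/a) nu m t] (resp. [<=]) for large [t], and conversely.
   So [a > 0] is an admissible upper exponent for one function exactly when
   [1/a] is an admissible lower exponent for the other; since both indices are
   nonnegative and the sets of admissible exponents are intervals, this turns
   into [beta g = 1 / alpha (nu m)] and [alpha g = 1 / beta (nu m)]. *)

Lemma powR_ge1 (R : realType) (x e : R) : 1 <= x -> 0 <= e -> 1 <= x `^ e.
Proof. by move=> x1 e0; rewrite -(powRr0 x) ler_powR. Qed.

Lemma powR_invrK (R : realType) (x e : R) : 0 <= x -> 0 < e -> (x `^ e^-1) `^ e = x.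
Proof. by move=> x0 e0; rewrite -powRrM mulVf ?gt_eqF // powRr1. Qed.

Lemma inve_eq_dual (R : realType) (al be : \bar R) :
  (0 <= al)%E -> (0 <= be)%E ->
  (forall s : R, 0 < s -> (al < s%:E)%E -> (s^-1%:E <= be)%E) ->
  (forall b : R, 0 < b -> (b%:E < be)%E -> (al <= b^-1%:E)%E) ->
  be = (al^-1)%E.
Proof.
case: al be => [r| |] [b| |] //; rewrite ?lee_fin => r0 b0 al_lt be_gt.
- have [r_eq0|r_neq0] := eqVneq r 0.
    have b1 : 0 < b + 1 by rewrite ltr_wpDl.
    have := al_lt (b + 1)^-1; rewrite invrK lee_fin lte_fin r_eq0 !invr_gt0.
    by move=> /(_ b1 b1); rewrite gerDl ler10.
  have r_gt0 : 0 < r by rewrite lt_def r_neq0.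
  rewrite inver (negbTE r_neq0); congr (_%:E); apply/eqP; rewrite eq_le.
  apply/andP; split; rewrite leNgt; apply/negP => /midf_lt[];
    move: (_ / 2) => c lt_c c_lt.
    have c_gt0 : 0 < c by rewrite (lt_trans _ lt_c) // invr_gt0.
    have := be_gt _ c_gt0; rewrite !lte_fin lee_fin => /(_ c_lt).
    rewrite -[c]invrK ltf_pV2 ?posrE ?invr_gt0 // in lt_c.
    by rewrite leNgt lt_c.
  have c_gt0 : 0 < c by apply: le_lt_trans lt_c.
  have := al_lt c^-1; rewrite invrK !lte_fin lee_fin invr_gt0.
  rewrite -[r]invrK ltf_pV2 ?posrE ?invr_gt0 // => /(_ c_gt0 c_lt).
  by rewrite leNgt lt_c.
- have [->|r_neq0] := eqVneq r 0; first by rewrite inve0.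
  have r_gt0 : 0 < r by rewrite lt_def r_neq0.
  have r2_gt0 : 0 < 2 / r by rewrite divr_gt0.
  have := be_gt _ r2_gt0 (ltry _); rewrite lee_fin invf_div ler_pdivlMr //.
  by move=> ?; exfalso; lra.
- have [->|b_neq0] := eqVneq b 0; first by rewrite invey.
  have b_gt0 : 0 < b by rewrite lt_def b_neq0.
  have b2_gt0 : 0 < b / 2 by rewrite divr_gt0.
  have b2_lt : b / 2 < b by lra.
  by have := be_gt _ b2_gt0; rewrite lte_fin => /(_ b2_lt).
- by have := be_gt 1 ltr01 (ltry _).
Qed.

Definition growth_le (R : realType) (f : R -> R) (a : R) :=
  exists2 C : R, 0 < C & forall Lam, 1 < Lam -> exists X, forall x, X <= x ->
    forall l, 1 <= l <= Lam -> f (l * x) <= C * (l `^ a * f x).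

Definition growth_ge (R : realType) (f : R -> R) (b : R) :=
  exists2 D : R, 0 < D & forall Lam, 1 < Lam -> exists X, forall x, X <= x ->
    forall l, 1 <= l <= Lam -> D * (l `^ b * f x) <= f (l * x).

Definition nondecr_eventually_pos (R : realType) (f : R -> R) :=
  [/\ forall x, 0 <= f x, {homo f : x y / x <= y}
    & exists X0, forall x, X0 <= x -> 0 < f x].

Section GrowthIndices.
Variables (R : realType) (f : R -> R).
Hypothesis f_reg : nondecr_eventually_pos f.

Let f_ge0 x : 0 <= f x. Proof. by case: f_reg. Qed.
Let f_nondecr : {homo f : x y / x <= y}. Proof. by case: f_reg. Qed.
Let f_eventually_gt0 : exists X0, forall x, X0 <= x -> 0 < f x.
Proof. by case: f_reg. Qed.

Let scaled_gt0 X0 : (forall x, X0 <= x -> 0 < f x) ->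
  forall e l x, 1 <= l -> X0 <= x -> 0 < l `^ e * f x.
Proof.
by move=> fX0 e l x l1 xX0; rewrite mulr_gt0 ?fX0 // powR_gt0 // (lt_le_trans ltr01).
Qed.

Lemma alpha_idxE : alpha_idx f = ereal_inf [set a%:E | a in growth_le f].
Proof.
have [X0 fX0] := f_eventually_gt0.
rewrite /alpha_idx; congr (ereal_inf (image _ _)); apply/seteqP; split=> a [C C0 HC].
- exists (2 * C); first by rewrite mulr_gt0.
  move=> Lam Lam1; have : (limsup_infty (ratio_sup f a Lam) < (2 * C)%:E)%E.
    by rewrite (le_lt_trans (HC _ Lam1)) // lte_fin ltr_pMl // ltr1n.
  move=> /ereal_inf_lt[_ [X _ <-]] HX.
  exists (Num.max X X0) => x; rewrite ge_max => /andP[xX xX0] l /andP[l1 lL].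
  rewrite -ler_pdivrMr ?(scaled_gt0 fX0) //; apply/ltW; rewrite -lte_fin.
  apply: le_lt_trans HX.
  apply: le_trans (ereal_sup_ubound _); last by exists x.
  by apply: ereal_sup_ubound; exists l => //=; rewrite in_itv /= l1 lL.
- exists C => // Lam Lam1; have [X HX] := HC Lam Lam1.
  apply: le_trans (ereal_inf_lbound _) _; first by exists (Num.max X X0).
  apply/ereal_supP => _ [x /= + <-]; rewrite ge_max => /andP[xX xX0].
  apply/ereal_supP => _ [l /= + <-]; rewrite in_itv /= => /andP[l1 lL].
  by rewrite lee_fin ler_pdivrMr ?(scaled_gt0 fX0) // HX // l1.
Qed.

Lemma beta_idxE : beta_idx f = ereal_sup [set b%:E | b in growth_ge f].
Proof.
have [X0 fX0] := f_eventually_gt0.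
rewrite /beta_idx; congr (ereal_sup (image _ _)); apply/seteqP; split=> b [D D0 HD].
- exists (D / 2); first by rewrite divr_gt0.
  move=> Lam Lam1; have : ((D / 2)%:E < liminf_infty (ratio_inf f b Lam))%E.
    by rewrite (lt_le_trans _ (HD _ Lam1)) // lte_fin ltr_pdivrMr // ltr_pMr // ltr1n.
  move=> /ereal_sup_gt[_ [X _ <-]] HX.
  exists (Num.max X X0) => x; rewrite ge_max => /andP[xX xX0] l /andP[l1 lL].
  rewrite -ler_pdivlMr ?(scaled_gt0 fX0) //; apply/ltW; rewrite -lte_fin.
  apply: lt_le_trans HX _.
  apply: le_trans (ereal_inf_lbound _) _; first by exists x.
  by apply: ereal_inf_lbound; exists l => //=; rewrite in_itv /= l1 lL.
- exists D => // Lam Lam1; have [X HX] := HD Lam Lam1.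
  apply: le_trans (ereal_sup_ubound _); last by exists (Num.max X X0).
  apply/ereal_infP => _ [x /= + <-]; rewrite ge_max => /andP[xX xX0].
  apply/ereal_infP => _ [l /= + <-]; rewrite in_itv /= => /andP[l1 lL].
  by rewrite lee_fin ler_pdivlMr ?(scaled_gt0 fX0) // HX // l1.
Qed.

Lemma growth_le_mono a a' : a <= a' -> growth_le f a -> growth_le f a'.
Proof.
move=> aa' [C C0 HC]; exists C => // Lam Lam1; have [X HX] := HC Lam Lam1.
exists X => x xX l /andP[l1 lL]; have lLam : 1 <= l <= Lam by rewrite l1.
apply: le_trans (HX x xX l lLam) _.
by rewrite ler_pM2l //; apply: ler_wpM2r => //; exact: ler_powR.
Qed.

Lemma growth_ge_mono b b' : b' <= b -> growth_ge f b -> growth_ge f b'.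
Proof.
move=> b'b [D D0 HD]; exists D => // Lam Lam1; have [X HX] := HD Lam Lam1.
exists X => x xX l /andP[l1 lL]; have lLam : 1 <= l <= Lam by rewrite l1.
apply: le_trans (HX x xX l lLam).
by rewrite ler_pM2l //; apply: ler_wpM2r => //; exact: ler_powR.
Qed.

Lemma growth_ge0 : growth_ge f 0.
Proof.
exists 1 => // Lam _; exists 0 => x x0 l /andP[l1 _].
by rewrite powRr0 !mul1r f_nondecr // ler_peMl.
Qed.

Lemma growth_le_ge0 a : growth_le f a -> 0 <= a.
Proof.
have [X0 fX0] := f_eventually_gt0.
move=> [C C0 HC]; rewrite leNgt; apply/negP => a_lt0.
(* A negative exponent would make [f (Lam x) <= C Lam^a f x < f x] for a large [Lam]. *)
set Lam := (2 * C + 2) `^ (- a^-1).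
have Lam1 : 1 < Lam.
  have ai_gt0 : 0 < - a^-1 by rewrite oppr_gt0 invr_lt0.
  by have := @gt0_ltr_powR R _ ai_gt0 1 (2 * C + 2); rewrite powR1 !nnegrE; apply; lra.
have [X HX] := HC Lam Lam1; set x := Num.max (Num.max X X0) 0.
have [xX xX0 x_ge0] : [/\ X <= x, X0 <= x & 0 <= x] by rewrite !le_max !lexx !orbT.
have Lam_a : Lam `^ a = (2 * C + 2)^-1.
  by rewrite -powRrM mulNr mulVf ?lt_eqF // powRN powRr1 //; lra.
have LamLam : 1 <= Lam <= Lam by rewrite (ltW Lam1) lexx.
have := le_trans (f_nondecr (ler_peMl x_ge0 (ltW Lam1))) (HX x xX Lam LamLam).
rewrite Lam_a mulrA -[X in X <= _ -> _]mul1r ler_pM2r ?fX0 //.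
rewrite ler_pdivlMr; lra.
Qed.

Lemma alpha_idx_ge0 : (0 <= alpha_idx f)%E.
Proof.
by rewrite alpha_idxE; apply/ereal_infP => _ [a /growth_le_ge0 a_ge0 <-].
Qed.

Lemma beta_idx_ge0 : (0 <= beta_idx f)%E.
Proof.
by rewrite beta_idxE; apply: ereal_sup_ubound; exists 0; first exact: growth_ge0.
Qed.

Lemma growth_le_gt_alpha s : (alpha_idx f < s%:E)%E -> growth_le f s.
Proof.
rewrite alpha_idxE => /ereal_inf_lt[_ [a fa <-]].
by rewrite lte_fin => /ltW/growth_le_mono; apply.
Qed.

Lemma growth_ge_lt_beta s : (s%:E < beta_idx f)%E -> growth_ge f s.
Proof.
rewrite beta_idxE => /ereal_sup_gt[_ [b fb <-]].
by rewrite lte_fin => /ltW/growth_ge_mono; apply.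
Qed.

Lemma alpha_idx_le s : growth_le f s -> (alpha_idx f <= s%:E)%E.
Proof. by rewrite alpha_idxE => fs; apply: ereal_inf_lbound; exists s. Qed.

Lemma beta_idx_ge s : growth_ge f s -> (s%:E <= beta_idx f)%E.
Proof. by rewrite beta_idxE => fs; apply: ereal_sup_ubound; exists s. Qed.

End GrowthIndices.

Lemma index_duality (R : realType) (g h : R -> R) :
  nondecr_eventually_pos g -> nondecr_eventually_pos h ->
  (forall b, 0 < b -> growth_ge g b -> growth_le h b^-1) ->
  (forall a, 0 < a -> growth_le h a -> growth_ge g a^-1) ->
  (forall a, 0 < a -> growth_le g a -> growth_ge h a^-1) ->
  (forall b, 0 < b -> growth_ge h b -> growth_le g b^-1) ->
  beta_idx g = ((alpha_idx h)^-1)%E /\ alpha_idx g = ((beta_idx h)^-1)%E.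
Proof.
move=> g_reg h_reg ge_g ge_h le_g le_h; split.
  apply: inve_eq_dual; rewrite ?alpha_idx_ge0 ?beta_idx_ge0 //.
    by move=> s s0 /(growth_le_gt_alpha h_reg)/(ge_h _ s0); exact: beta_idx_ge.
  by move=> b b0 /(growth_ge_lt_beta g_reg)/(ge_g _ b0); exact: alpha_idx_le.
suff -> : beta_idx h = ((alpha_idx g)^-1)%E by rewrite inveK.
apply: inve_eq_dual; rewrite ?alpha_idx_ge0 ?beta_idx_ge0 //.
  by move=> s s0 /(growth_le_gt_alpha g_reg)/(le_g _ s0); exact: beta_idx_ge.
by move=> b b0 /(growth_ge_lt_beta h_reg)/(le_h _ b0); exact: alpha_idx_le.
Qed.

Definition pos_nondecr_unbounded (R : realType) (m : nat -> R) :=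
  [/\ forall i, 0 < m i, {homo m : i j / (i <= j)%N >-> i <= j}
    & forall T, exists j, T < m j].

Lemma weight_sequence_quotients (R : realType) (M : nat -> R) :
  weight_sequence M -> pos_nondecr_unbounded (quotients M).
Proof.
case=> M0 M_gt0 M_logconvex M_root.
have m_gt0 i : 0 < quotients M i by rewrite divr_gt0.
split=> //.
  apply/nondecreasing_seqP => p; rewrite /quotients ler_pdivrMr // mulrAC.
  by rewrite ler_pdivlMr // -expr2 mulrC; apply: M_logconvex.
move=> T; apply/not_existsP => /= m_le.
have {}m_le j : quotients M j <= T by rewrite leNgt; apply/negP/m_le.
have T_gt0 : 0 < T := lt_le_trans (m_gt0 0%N) (m_le 0%N).
(* Bounded quotients give [M p <= T ^ p], which keeps the roots [M p ^ (1/p)] below [T]. *)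
have M_le p : M p <= T ^+ p.
  elim: p => [|p IH]; first by rewrite M0 expr0.
  rewrite -(divfK (lt0r_neq0 (M_gt0 p)) (M p.+1)) exprS.
  by apply: ler_pM => //; [exact/ltW/m_gt0 | exact/ltW | exact: m_le].
move/cvgryPge: M_root => /(_ (T + 1))[N _ MN].
have := MN N.+1 (leqnSn N); apply/negP; rewrite -ltNge /=.
apply: (@le_lt_trans _ _ ((T ^+ N.+1) `^ (N.+1%:R)^-1)).
  by apply: ge0_ler_powR; rewrite ?nnegrE ?invr_ge0 ?exprn_ge0 ?M_le ?ltW.
rewrite -powR_mulrn ?ltW // -powRrM mulfV ?pnatr_eq0 // powRr1 ?ltW //.
by rewrite ltrDl.
Qed.

Section CountingAndStepFunction.
Variables (R : realType) (m : nat -> R).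
Hypothesis m_reg : pos_nondecr_unbounded m.

Let m_gt0 i : 0 < m i. Proof. by case: m_reg. Qed.
Let m_nondecr : {homo m : i j / (i <= j)%N >-> i <= j}. Proof. by case: m_reg. Qed.
Let m_unbounded T : exists j, T < m j. Proof. by case: m_reg. Qed.

(* [nu m t] is the index of the first [m_n > t]; in particular the counted set is
   finite, so the [fine] in the definition of [nu] is harmless. *)
Lemma nu_count t : exists n : nat, nu m t = n%:R /\ forall j, (j < n)%N = (m j <= t).
Proof.
have t_lt : exists j, t < m j by apply: m_unbounded.
exists (ex_minn t_lt); case: ex_minnP => n t_lt_mn n_min.
have mn j : (j < n)%N = (m j <= t).
  apply/idP/idP => [jn|mjt].
    by rewrite leNgt; apply/negP => /n_min; rewrite leqNgt jn.
  rewrite ltnNge; apply/negP => nj.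
  by have := lt_le_trans t_lt_mn (m_nondecr nj); rewrite ltNge mjt.
split=> //; rewrite /nu.
have -> : [set j : nat | m j <= t] = `I_n by apply/seteqP; split=> j /=; rewrite mn.
by rewrite /counting asboolT ?finite_II // (@card_fset_set _ _ n) //; exact: card_eqxx.
Qed.

Lemma nu_ge_nat k t : (0 < k)%N -> (k%:R <= nu m t) = (m k.-1 <= t).
Proof. by move=> k_gt0; have [n [-> mn]] := nu_count t; rewrite ler_nat -mn prednK. Qed.

Lemma nu_nondecr : {homo nu m : s t / s <= t}.
Proof.
move=> s t st; have [n [-> mn]] := nu_count s; have [k [-> mk]] := nu_count t.
by rewrite ler_nat leqNgt mn; apply/negP => /le_trans/(_ st); rewrite -mk ltnn.
Qed.

Lemma nu_ge0 t : 0 <= nu m t.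
Proof. by have [n [-> _]] := nu_count t. Qed.

Lemma nu_reg : nondecr_eventually_pos (nu m).
Proof.
split; [exact: nu_ge0 | exact: nu_nondecr |].
by exists (m 0%N) => t m0t; apply: lt_le_trans ltr01 _; rewrite (@nu_ge_nat 1).
Qed.

Lemma seqfun_nat k : seqfun m k%:R = m k.-1.
Proof. by rewrite /seqfun natrK. Qed.

Lemma seqfun_gt0 x : 0 < seqfun m x.
Proof. exact: m_gt0. Qed.

Lemma seqfun_nondecr : {homo seqfun m : x y / x <= y}.
Proof. by move=> x y xy; apply: m_nondecr; rewrite -!subn1 leq_sub2r // le_truncn. Qed.

Lemma seqfun_reg : nondecr_eventually_pos (seqfun m).
Proof.
split=> [x|x y|]; [exact/ltW/seqfun_gt0 | exact: seqfun_nondecr |].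
by exists 0 => x _; apply: seqfun_gt0.
Qed.

Lemma seqfun_floor x : 1 <= x ->
  exists2 j : nat, [/\ (0 < j)%N, j%:R <= x & x < j%:R + 1] & seqfun m x = m j.-1.
Proof.
move=> x_ge1; exists (Num.truncn x) => //.
have /andP[jx xj] := truncn_itv (le_trans ler01 x_ge1).
by rewrite truncn_gt0 x_ge1 jx natr1 xj.
Qed.

Lemma seqfun_large T : exists2 X, 2 <= X & forall x, X <= x -> T < seqfun m x.
Proof.
have [j Tj] := m_unbounded T; exists j.+2%:R; first by rewrite ler_nat.
move=> x jx; apply: (lt_le_trans Tj); rewrite -[m j](seqfun_nat j.+1).
by apply: seqfun_nondecr; apply: le_trans jx; rewrite ler_nat.
Qed.

Lemma seqfun_le_lt_nuD1 x s : 1 <= x -> seqfun m x <= s -> x < nu m s + 1.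
Proof.
move=> x_ge1; have [j [j_gt0 _ xj] ->] := seqfun_floor x_ge1.
by rewrite -nu_ge_nat // => jN; rewrite (lt_le_trans xj) // lerD2r.
Qed.

Lemma seqfun_gt_nu_le x s : 1 <= x -> s < seqfun m x -> nu m s <= x.
Proof.
move=> x_ge1; have [j [j_gt0 jx _] ->] := seqfun_floor x_ge1.
by rewrite ltNge -nu_ge_nat // -ltNge => /ltW/le_trans; apply.
Qed.

Lemma seqfun_nuD1_gt t : t < seqfun m (nu m t + 1).
Proof.
have N1 : 1 <= nu m t + 1 by rewrite lerDr nu_ge0.
by rewrite ltNge; apply/negP => /(seqfun_le_lt_nuD1 N1); rewrite ltxx.
Qed.

Lemma seqfun_nu_le t : 1 <= nu m t -> seqfun m (nu m t) <= t.
Proof.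
have [n [Nt _]] := nu_count t; rewrite Nt ler1n => n_gt0.
by rewrite seqfun_nat -nu_ge_nat // Nt.
Qed.

Lemma growth_ge_seqfun_le_nu b : 0 < b ->
  growth_ge (seqfun m) b -> growth_le (nu m) b^-1.
Proof.
move=> b_gt0 [D D_gt0 gD].
have D_le1 : D <= 1.
  have [X HX] := gD 2 ltac:(lra).
  by have := HX X (lexx X) 1 ltac:(lra); rewrite powR1 !mul1r ger_pMl // seqfun_gt0.
have bV_gt0 : 0 < b^-1 by rewrite invr_gt0.
exists (2 * D^-1 `^ b^-1); first by rewrite mulr_gt0 // powR_gt0 // invr_gt0.
move=> Lam' Lam'1; set Lam := (Lam' / D) `^ b^-1 + 1.
have Lam1 : 1 < Lam by rewrite ltrDr powR_gt0 // divr_gt0 //; lra.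
have [X HX] := gD Lam Lam1.
have [j Xj] : exists j : nat, X < j.+1%:R by exists (Num.truncn X); exact: truncnS_gt.
exists (m j) => t jt l /andP[l1 lL]; have l_gt0 : 0 < l by lra.
have Nt_ge : j.+1%:R <= nu m t by rewrite nu_ge_nat.
have Nt_ge1 : 1 <= nu m t by apply: le_trans Nt_ge; rewrite ler1n.
set mu := (l / D) `^ b^-1.
have lD_ge1 : 1 <= l / D by rewrite ler_pdivlMr // mul1r (le_trans D_le1).
have mu_ge1 : 1 <= mu by apply: powR_ge1; last exact: ltW.
have muL : mu <= Lam.
  apply: ler_wpDr => //; apply: ge0_ler_powR; rewrite ?nnegrE; [exact: ltW | lra | |].
  - by rewrite divr_ge0 //; lra.
  - by rewrite ler_pM2r ?invr_gt0.
have D_mu : D * mu `^ b = l.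
  by rewrite powR_invrK ?(le_trans ler01 lD_ge1) // mulrC divfK ?lt0r_neq0.
(* [l t < l g (nu t + 1) <= g (mu (nu t + 1))] *)
have N_le : nu m (l * t) <= mu * (nu m t + 1).
  apply: seqfun_gt_nu_le; first nra.
  have t_lt : l * t < l * seqfun m (nu m t + 1) by rewrite ltr_pM2l // seqfun_nuD1_gt.
  apply: lt_le_trans t_lt _; rewrite -D_mu -mulrA.
  by apply: HX; [lra | rewrite mu_ge1 muL].
apply: le_trans N_le _.
have -> : 2 * D^-1 `^ b^-1 * (l `^ b^-1 * nu m t) = mu * (2 * nu m t).
  by rewrite /mu powRM ?invr_ge0 ?ltW //; ring.
by rewrite ler_pM2l ?(lt_le_trans ltr01 mu_ge1) //; lra.
Qed.

Lemma growth_le_seqfun_ge_nu a : 0 < a ->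
  growth_le (seqfun m) a -> growth_ge (nu m) a^-1.
Proof.
move=> a_gt0 [C C_gt0 gC].
have aV_gt0 : 0 < a^-1 by rewrite invr_gt0.
exists (C^-1 `^ a^-1 / 2); first by rewrite divr_gt0 // powR_gt0 // invr_gt0.
move=> Lam' Lam'1; set Lam := 1 + (Lam' / C) `^ a^-1.
have Lam1 : 1 < Lam by rewrite ltrDl powR_gt0 // divr_gt0 //; lra.
have [X HX] := gC Lam Lam1.
have [j Xj] : exists j : nat, X < j.+1%:R by exists (Num.truncn X); exact: truncnS_gt.
exists (m j) => t jt l /andP[l1 lL]; have l_gt0 : 0 < l by lra.
have Nt_ge : j.+1%:R <= nu m t by rewrite nu_ge_nat.
have Nt_ge1 : 1 <= nu m t by apply: le_trans Nt_ge; rewrite ler1n.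
have t_gt0 : 0 < t := lt_le_trans (m_gt0 j) jt.
have N_le : nu m t <= nu m (l * t) by apply: nu_nondecr; rewrite ler_peMl ?(ltW t_gt0).
set mu := (l / C) `^ a^-1; have mu_ge0 : 0 <= mu by apply: powR_ge0.
have -> : C^-1 `^ a^-1 / 2 * (l `^ a^-1 * nu m t) = mu / 2 * nu m t.
  by rewrite /mu powRM ?invr_ge0 ?ltW //; ring.
have [mu_le1|mu_gt1] := lerP mu 1.
  have : mu / 2 * nu m t <= nu m t by apply: ler_piMl; [exact: nu_ge0 | lra].
  lra.
have muL : mu <= Lam.
  apply: ler_wpDl => //; apply: ge0_ler_powR; rewrite ?nnegrE; [exact: ltW | | |].
  - by rewrite divr_ge0 // ltW.
  - by rewrite divr_ge0 //; lra.
  - by rewrite ler_pM2r ?invr_gt0.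
have C_mu : C * mu `^ a = l.
  by rewrite powR_invrK ?divr_ge0 ?ltW // mulrC divfK ?lt0r_neq0.
(* [g (mu (nu t)) <= l g (nu t) <= l t] *)
have N_gt : mu * nu m t < nu m (l * t) + 1.
  apply: seqfun_le_lt_nuD1; first nra.
  have g_le : l * seqfun m (nu m t) <= l * t by rewrite ler_pM2l // seqfun_nu_le.
  apply: le_trans g_le; rewrite -C_mu -mulrA.
  by apply: HX; [lra | rewrite (ltW mu_gt1) muL].
lra.
Qed.

Lemma growth_le_nu_ge_seqfun a : 0 < a ->
  growth_le (nu m) a -> growth_ge (seqfun m) a^-1.
Proof.
move=> a_gt0 [C C_gt0 nC].
have aV_gt0 : 0 < a^-1 by rewrite invr_gt0.
set P := 2 `^ a; have P_gt0 : 0 < P by rewrite powR_gt0.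
set K := 4 * C ^+ 2 * P; have K_gt0 : 0 < K by rewrite !mulr_gt0 // exprn_gt0.
set D := K^-1 `^ a^-1; have D_gt0 : 0 < D by rewrite powR_gt0 // invr_gt0.
exists D => // Lam' Lam'1; set Lam := 2 + D * Lam' `^ a^-1.
have Lam2 : 2 <= Lam by rewrite /Lam lerDl mulr_ge0 ?powR_ge0 // ltW.
have [T HT] := nC Lam ltac:(lra).
have [X X2 HX] := seqfun_large (2 * T).
exists X => x Xx l /andP[l1 lL]; have l_gt0 : 0 < l by lra.
set t := seqfun m x; have t_gt : 2 * T < t := HX x Xx.
have t_gt0 : 0 < t := seqfun_gt0 x.
rewrite mulrA; set lam := D * l `^ a^-1; have [lam_le1|lam_gt1] := lerP lam 1.
  have x_le : x <= l * x by rewrite ler_peMl //; lra.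
  exact: le_trans (ler_piMl (ltW t_gt0) lam_le1) (seqfun_nondecr x_le).
rewrite leNgt; apply/negP => glx.
have lx_ge2 : 2 <= l * x by nra.
(* The doubling bound at [t / 2]: [nu t <= C P nu (t / 2) <= C P x]. *)
have Nt : nu m t <= C * (P * x).
  have N_half : nu m (t / 2) <= x by apply: seqfun_gt_nu_le; [lra | rewrite -/t; lra].
  have := HT (t / 2) ltac:(lra) 2 ltac:(lra); rewrite mulrC divfK ?pnatr_eq0 // => Nt.
  by apply: le_trans Nt _; rewrite ler_pM2l // ler_pM2l.
have lamL : lam <= Lam.
  apply: ler_wpDl; first lra.
  apply: ler_wpM2l; first exact: ltW.
  by apply: ge0_ler_powR; rewrite ?nnegrE; [exact: ltW | lra | lra | lra].
have N_lam : nu m (lam * t) <= C * (lam `^ a * nu m t).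
  by apply: HT; [lra | rewrite (ltW lam_gt1) lamL].
have lam_a : lam `^ a = K^-1 * l.
  by rewrite /lam powRM ?powR_ge0 ?ltW // /D !powR_invrK ?invr_ge0 ?ltW.
(* [l x < nu (lam t) + 1 <= C lam^a nu t + 1 <= l x / 4 + 1], impossible as [l x >= 2]. *)
have lx_lt : l * x < nu m (lam * t) + 1 by apply: (seqfun_le_lt_nuD1 _ (ltW glx)); lra.
have : l * x < C * (K^-1 * l * (C * (P * x))) + 1.
  apply: lt_le_trans lx_lt _; rewrite lerD2r; apply: le_trans N_lam _.
  by rewrite lam_a ler_pM2l // ler_pM2l // mulr_gt0 ?invr_gt0.
have -> : C * (K^-1 * l * (C * (P * x))) = l * x / 4.
  by rewrite /K; field; rewrite ?lt0r_neq0.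
lra.
Qed.

Lemma growth_ge_nu_le_seqfun b : 0 < b ->
  growth_ge (nu m) b -> growth_le (seqfun m) b^-1.
Proof.
move=> b_gt0 [D D_gt0 nD].
have bV_gt0 : 0 < b^-1 by rewrite invr_gt0.
set E := (4 / D) `^ b^-1; have E_gt0 : 0 < E by rewrite powR_gt0 // divr_gt0.
set C := 1 + E; have C_gt1 : 1 < C by rewrite /C; lra.
have C_gt0 : 0 < C := lt_trans ltr01 C_gt1.
exists C; first lra.
have DC : 4 <= D * C `^ b.
  have E_b : E `^ b = 4 / D by rewrite powR_invrK // divr_ge0 // ltW.
  rewrite mulrC -ler_pdivrMr // -E_b.
  apply: ge0_ler_powR; rewrite ?nnegrE; [exact: ltW | exact: ltW | lra |].
  by rewrite /C; lra.
move=> Lam' Lam'1; set Lam := C * Lam' `^ b^-1.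
have Lam'_pow : 1 <= Lam' `^ b^-1 by apply: powR_ge1; [lra | exact: ltW].
have Lam1 : 1 < Lam by rewrite /Lam; nra.
have [T HT] := nD Lam Lam1.
have [X X2 HX] := seqfun_large T.
exists X => x Xx l /andP[l1 lL]; have l_gt0 : 0 < l by lra.
set t := seqfun m x; set lam := C * l `^ b^-1.
have l_pow : 1 <= l `^ b^-1 by apply: powR_ge1 => //; exact: ltW.
have lamL : lam <= Lam.
  rewrite /lam /Lam ler_pM2l; last lra.
  by apply: ge0_ler_powR; rewrite ?nnegrE; [exact: ltW | lra | lra | lra].
rewrite mulrA -/lam leNgt; apply/negP => glx.
have N_lam : D * (lam `^ b * nu m t) <= nu m (lam * t).
  by apply: HT; [exact/ltW/HX | rewrite lamL andbT /lam; nra].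
have N_lam_le : nu m (lam * t) <= l * x by apply: (seqfun_gt_nu_le _ glx); nra.
have x_lt : x < nu m t + 1 by apply: seqfun_le_lt_nuD1; [lra | exact: lexx].
have lam_b : lam `^ b = C `^ b * l.
  by rewrite /lam powRM ?powR_ge0 ?(ltW C_gt0) // powR_invrK // ltW.
(* [4 l nu t <= D C^b l nu t = D lam^b nu t <= nu (lam t) <= l x],
   so [4 nu t <= x < nu t + 1]. *)
have : 4 * (l * nu m t) <= l * x.
  apply: le_trans N_lam_le; apply: le_trans N_lam.
  rewrite lam_b -!mulrA; apply: le_trans (ler_wpM2r _ DC) _.
    by rewrite mulr_ge0 ?nu_ge0 ?ltW.
  by rewrite -!mulrA.
rewrite mulrCA ler_pM2l // => x_ge.
clear -x_ge x_lt X2 Xx; lra.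
Qed.

End CountingAndStepFunction.

Theorem proposition4p1 (R : realType) (M : nat -> R) :
  weight_sequence M ->
  beta_idx (seqfun (quotients M)) = ((alpha_idx (nu (quotients M)))^-1)%E /\
  alpha_idx (seqfun (quotients M)) = ((beta_idx (nu (quotients M)))^-1)%E.
Proof.
move=> /weight_sequence_quotients m_reg.
apply: index_duality; [exact: seqfun_reg | exact: nu_reg | | | |].
- exact: growth_ge_seqfun_le_nu.
- exact: growth_le_nu_ge_seqfun.
- exact: growth_le_seqfun_ge_nu.
- exact: growth_ge_nu_le_seqfun.
Qed.
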